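(* Let $\mathcal{A}$ be a locally constant algebraic conformal net, and let $A$ be the associative $\mathbf{K}$-algebra that $\mathcal{A}$ assigns to every positively-oriented interval. Then $A$ is commutative.
   Context: Fix a field $\mathbf{K}$. $\mathsf{Algebra}$ denotes the category of associative unital $\mathbf{K}$-algebras and algebra homomorphisms. Orient $\mathbf{R}$ from the negative to the positive reals. An interval is an oriented compact connected one-dimensional submanifold of $\mathbf{R}$, which is either positively-oriented (orientation induced from $\mathbf{R}$) or negatively-oriented (opposite orientation); $\overline{I}$ denotes $I$ with reversed orientation, and $J$ is a subinterval of $I$ if $J\subset I$. $\mathsf{INT}$ is the category whose objects are intervals and whose morphisms are orientation-preserving embeddings. An algebraic conformal net is a functor $\mathcal{A}\colon \mathsf{INT}\to\mathsf{Algebra}$ with $\mathcal{A}(\overline{I})=\mathcal{A}(I)^{\mathrm{op}}$ for every interval $I$, such that, for all subintervals $I,J$ of an interval $K$ with inclusions $i\colon I\hookrightarrow K$, $j\colon J\hookrightarrow K$: (1) (isotony) $\mathcal{A}(f)$ is injective for every embedding $f$; (2) (locality) if $I$ and $J$ have disjoint interiors, then $\mathcal{A}(i)(\mathcal{A}(I))$ and $\mathcal{A}(j)(\mathcal{A}(J))$ are mutually commuting subalgebras of $\mathcal{A}(K)$; (3) (strong additivity) if $K=I\cup J$, then $\mathcal{A}(K)$ is generated as an algebra by $\mathcal{A}(i)(\mathcal{A}(I))$ and $\mathcal{A}(j)(\mathcal{A}(J))$. An algebraic conformal net $\mathcal{A}$ is locally constant if it maps every positively-oriented interval to one and the same algebra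 $A$ and every embedding between positively-oriented intervals to the identity of $A$. *)

From Stdlib Require Import Reals.
From Coquelicot Require Import Coquelicot.
From HB Require Import structures.
From mathcomp Require Import all_boot all_algebra.

Set Implicit Arguments.
Unset Strict Implicit.
Unset Printing Implicit Defensive.

(** An interval is [lo, hi] with lo < hi (a compact connected 1-dimensional
    submanifold of R), together with an orientation: [ipos = true] means
    positively oriented (orientation induced from R), [false] negatively. *)
Record interval := Interval {
  ilo : R;
  ihi : R;
  ilo_lt_hi : Rlt ilo ihi;
  ipos : bool }.

Definition irev (I : interval) : interval :=
  Interval (ilo_lt_hi I) (~~ ipos I).

Definition inI (I : interval) (x : R) : Prop := Rle (ilo I) x /\ Rle x (ihi I).

(** Orientation-preserving (smooth) embeddings [I -> J]: restrictions to [I]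
    of smooth maps [R -> R] mapping [I] into [J] whose derivative does not
    vanish on [I], with positive sign when [I] and [J] have the same
    orientation and negative sign otherwise. (Non-vanishing derivative on the
    compact interval [I] makes the map an injective immersion, hence an
    embedding.) *)
Record emb (I J : interval) := Emb {
  emb_fun :> R -> R;
  emb_smooth : forall (n : nat) (x : R), ex_derive_n emb_fun n x;
  emb_maps : forall x, inI I x -> inI J (emb_fun x);
  emb_orient : forall x, inI I x ->
    if ipos I == ipos J then Rlt R0 (Derive emb_fun x)
    else Rlt (Derive emb_fun x) R0 }.

Import GRing.Theory.
Local Open Scope ring_scope.

(** * Associative unital K-algebras (the zero algebra included).
    The underlying K-vector space is a MathComp [lmodType K]. *)
Record kalg (K : fieldType) := KAlg {
  kvs :> lmodType K;
  kmul : kvs -> kvs -> kvs;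
  kone : kvs;
  kmulA : forall x y z, kmul x (kmul y z) = kmul (kmul x y) z;
  kmul1r : forall x, kmul kone x = x;
  kmulr1 : forall x, kmul x kone = x;
  kmulDl : forall x y z, kmul (x + y) z = kmul x z + kmul y z;
  kmulDr : forall x y z, kmul x (y + z) = kmul x y + kmul x z;
  kscaleAl : forall (a : K) x y, a *: kmul x y = kmul (a *: x) y;
  kscaleAr : forall (a : K) x y, a *: kmul x y = kmul x (a *: y) }.
Arguments kmul {K} k _ _.
Arguments kone {K} k.

Definition kalg_op (K : fieldType) (A : kalg K) : kalg K :=
  @KAlg K (kvs A) (fun x y : kvs A => kmul A y x) (kone A)
    (fun x y z : kvs A => esym (@kmulA _ A z y x))
    (@kmulr1 _ A) (@kmul1r _ A)
    (fun x y z : kvs A => @kmulDr _ A z x y) (fun x y z : kvs A => @kmulDl _ A y z x)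
    (fun (a : K) (x y : kvs A) => @kscaleAr _ A a y x)
    (fun (a : K) (x y : kvs A) => @kscaleAl _ A a y x).

Record alg_hom (K : fieldType) (A B : kalg K) := AlgHom {
  ahom :> A -> B;
  ahomD : forall x y, ahom (x + y) = ahom x + ahom y;
  ahomZ : forall (a : K) x, ahom (a *: x) = a *: ahom x;
  ahomM : forall x y, ahom (kmul A x y) = kmul B (ahom x) (ahom y);
  ahom1 : ahom (kone A) = kone B }.

Definition subalg_closed (K : fieldType) (A : kalg K) (S : A -> Prop) :=
  [/\ S (kone A),
      forall x y, S x -> S y -> S (x + y),
      forall (a : K) x, S x -> S (a *: x) &
      forall x y, S x -> S y -> S (kmul A x y)].

(** A functor INT -> Algebra: object map [netA], morphism map [netF]
    (well defined on embeddings, i.e. depending only on the map on [I]),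
    preserving identities and composition; together with the conditions
    A(rev I) = A(I)^op, isotony, locality and strong additivity.
    Inclusions of subintervals [I ⊆ K] are the embeddings [i : emb I K]
    that are the identity on [I] (these exist exactly when [I ⊆ K] with the
    same orientation). *)
Record conformal_net (K : fieldType) := ConformalNet {
  netA : interval -> kalg K;
  netF : forall I J, emb I J -> alg_hom (netA I) (netA J);
  netF_ext : forall I J (f g : emb I J),
    (forall x, inI I x -> f x = g x) -> forall a, netF f a = netF g a;
  netF_id : forall I (f : emb I I),
    (forall x, inI I x -> f x = x) -> forall a, netF f a = a;
  netF_comp : forall I J L (f : emb I J) (g : emb J L) (h : emb I L),
    (forall x, inI I x -> h x = g (f x)) ->
    forall a, netF h a = netF g (netF f a);
  net_op : forall I, netA (irev I) = kalg_op (netA I);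
  net_isotony : forall I J (f : emb I J), injective (netF f);
  net_locality : forall I J L (i : emb I L) (j : emb J L),
    (forall x, inI I x -> i x = x) -> (forall x, inI J x -> j x = x) ->
    Rle (ihi I) (ilo J) \/ Rle (ihi J) (ilo I) ->
    forall a b, kmul (netA L) (netF i a) (netF j b)
                = kmul (netA L) (netF j b) (netF i a);
  net_additivity : forall I J L (i : emb I L) (j : emb J L),
    (forall x, inI I x -> i x = x) -> (forall x, inI J x -> j x = x) ->
    (forall x, inI L x <-> inI I x \/ inI J x) ->
    forall S : netA L -> Prop, subalg_closed S ->
    (forall a, S (netF i a)) -> (forall b, S (netF j b)) ->
    forall c, S c }.

Definition kalg_cast (K : fieldType) (A B : kalg K) (e : A = B) (a : A) : B :=
  match e in _ = C return kvs C with erefl => a end.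

Definition locally_constant (K : fieldType) (N : conformal_net K) (A : kalg K) :=
  exists e : forall I, ipos I -> netA N I = A,
    forall I J (pI : ipos I) (pJ : ipos J) (f : emb I J) (a : netA N I),
      kalg_cast (e J pJ) (netF N f a) = kalg_cast (e I pI) a.

(** Take two positively oriented subintervals [0,1] and [1,2] of [0,2]. By
    locality, the images of their algebras in the algebra of [0,2] commute;
    but in a locally constant net all three algebras are A and both
    inclusions act as the identity, so any two elements of A commute. *)

From Pilot Require Import Defs.
From Stdlib Require Import Reals Lra.
From Coquelicot Require Import Coquelicot.
From HB Require Import structures.
From mathcomp Require Import all_boot all_algebra.

Lemma kalg_castM (K : fieldType) (B C : kalg K) (e : B = C) (u v : B) :
  kalg_cast e (kmul B u v) = kmul C (kalg_cast e u) (kalg_cast e v).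
Proof. by case: C / e. Qed.

Lemma kalg_castK (K : fieldType) (B C : kalg K) (e : B = C) (x : C) :
  kalg_cast e (kalg_cast (esym e) x) = x.
Proof. by case: C / e in x *. Qed.

Local Open Scope R_scope.

Lemma ex_derive_n_id n x : ex_derive_n (fun y : R => y) n x.
Proof. exact: (ex_derive_n_ext (fun y => y ^ 1) _ _ _ pow_1 (ex_derive_n_pow _ _ _)). Qed.

Definition inclusion_emb {I J : Defs.interval} (hIJ : ipos I = ipos J)
  (sIJ : forall x, inI I x -> inI J x) : emb I J.
Proof.
refine (@Emb I J (fun y => y) ex_derive_n_id sIJ _).
by move=> x _; rewrite hIJ eqxx Derive_id; exact: Rlt_0_1.
Defined.

Lemma locally_constant_kmulC (K : fieldType) (N : conformal_net K) (A : kalg K)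
    (I J L : Defs.interval) :
  locally_constant N A -> ipos I -> ipos J -> ipos L ->
  (forall x, inI I x -> inI L x) -> (forall x, inI J x -> inI L x) ->
  ihi I <= ilo J ->
  forall x y : A, kmul A x y = kmul A y x.
Proof.
move=> [e eF] pI pJ pL sIL sJL hIJ x y.
pose i := inclusion_emb (etrans pI (esym pL)) sIL.
pose j := inclusion_emb (etrans pJ (esym pL)) sJL.
have := @net_locality _ N I J L i j (fun _ _ => erefl) (fun _ _ => erefl)
  (or_introl hIJ) (kalg_cast (esym (e I pI)) x) (kalg_cast (esym (e J pJ)) y).
move/(f_equal (kalg_cast (e L pL))).
by rewrite !kalg_castM (eF _ _ pI pL) (eF _ _ pJ pL) !kalg_castK.
Qed.

Definition pos_interval {a b : R} (hab : a < b) : Defs.interval := Defs.Interval hab true.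

Lemma pos_interval_subset (a b c d : R) (hab : a < b) (hcd : c < d) :
  a <= c -> d <= b -> forall x, inI (pos_interval hcd) x -> inI (pos_interval hab) x.
Proof. by move=> ac db x; rewrite /inI /= => -[cx xd]; split; lra. Qed.

Lemma Rlt_1_2 : 1 < 2. Proof. lra. Qed.

Theorem mainTheorem1 (K : fieldType) (N : conformal_net K) (A : kalg K) :
  locally_constant N A -> forall x y : A, kmul A x y = kmul A y x.
Proof.
move=> lcN.
apply: (@locally_constant_kmulC _ N A (pos_interval Rlt_0_1) (pos_interval Rlt_1_2)
          (pos_interval Rlt_0_2) lcN erefl erefl erefl).
- by apply: pos_interval_subset; lra.
- by apply: pos_interval_subset; lra.
- by rewrite /=; lra.
Qed.
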